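(* Let $G=(N,A)$ be an arc-compressed $s$-$t$ DAG and let $uv\in A$. Then $\mathrm{ext}(uv)$ is a maximal safe sequence of arcs (for arc-path covers) if and only if $uv$ is a leaf in both the arc $s$-dominator tree and the arc $t$-dominator tree of $G$.
   Context: An $s$-$t$ DAG is a directed acyclic multigraph (parallel arcs allowed) with a unique source $s$ and a unique sink $t$ such that every node is reachable from $s$ and every node reaches $t$. It is arc-compressed if no node has both indegree exactly one and outdegree exactly one. An arc $ab$ $s$-dominates an arc $cd$ if $ab=cd$ or every $s$-$c$ path contains $ab$; $ab$ $t$-dominates $cd$ if $ab=cd$ or every $d$-$t$ path contains $ab$; strictly if also $ab\neq cd$. The immediate $s$-dominator of $cd$ is the strict $s$-dominator of $cd$ that is $s$-dominated by all its strict $s$-dominators. The arc $s$-dominator tree has node set $A$ plus an abstract root, the parent of an arc being its immediate $s$-dominator, or the root if it has no strict $s$-dominator; the arc $t$-dominator tree is defined symmetrically. An arc is a leaf if it is the parent of no arc. An arc $ab$ is a $x$-$y$ bridge if every $x$-$y$ path contains it; $\mathrm{ext}(uv)$ is the sequence of $s$-$u$ bridges (in path order), followed by $uv$, followed by the sequence of $v$-$t$ bridges. A sequence of arcs is a list of arcs each of which reaches the next (arc $ab$ reaches $cd$ if there is a $b$-$c$ path); $X$ is a subsequence of $Y$ if every arc of $X$ occurs in $Y$. An arc-path cover is a set of $s$-$t$ paths covering every arc. $X$ is safe if in every arc-path cover it is a subsequence of some path of the cover (sequences in no $s$-$t$ path are unsafe); it is maximal safe if it is safe and not a proper subsequence of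 another safe sequence of arcs. *)

(* A directed multigraph is given by a finite type of nodes V,
   a finite type of arcs E and endpoint maps src tgt : E -> V
   (parallel arcs = distinct elements of E with equal endpoints). *)
From mathcomp Require Import all_boot.
From mathcomp Require Import boolp.
Set Implicit Arguments. Unset Strict Implicit. Unset Printing Implicit Defensive.

Section Graph.
Variables (V E : finType) (src tgt : E -> V).

Fixpoint is_path (x : V) (p : seq E) (y : V) : bool :=
  match p with
  | [::] => x == y
  | e :: p' => (src e == x) && is_path (tgt e) p' y
  end.

Definition indeg (v : V) : nat := #|[set e | tgt e == v]|.
Definition outdeg (v : V) : nat := #|[set e | src e == v]|.

Definition st_DAG (s t : V) : Prop :=
  (forall x p, is_path x p x -> p = [::]) /\
  indeg s = 0 /\ outdeg t = 0 /\
  (forall v, indeg v = 0 -> v = s) /\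
  (forall v, outdeg v = 0 -> v = t) /\
  (forall v, (exists p, is_path s p v) /\ (exists q, is_path v q t)).

Definition arc_compressed : Prop :=
  forall v, ~ (indeg v = 1 /\ outdeg v = 1).

Definition sdom (s : V) (ab cd : E) : Prop :=
  ab = cd \/ forall p, is_path s p (src cd) -> ab \in p.
Definition tdom (t : V) (ab cd : E) : Prop :=
  ab = cd \/ forall p, is_path (tgt cd) p t -> ab \in p.

Definition strict_sdom s ab cd := sdom s ab cd /\ ab <> cd.
Definition strict_tdom t ab cd := tdom t ab cd /\ ab <> cd.

Definition idom_s s ab cd : Prop :=
  strict_sdom s ab cd /\ forall x, strict_sdom s x cd -> sdom s x ab.
Definition idom_t t ab cd : Prop :=
  strict_tdom t ab cd /\ forall x, strict_tdom t x cd -> tdom t x ab.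

Definition leaf_s s e : Prop := forall cd, ~ idom_s s e cd.
Definition leaf_t t e : Prop := forall cd, ~ idom_t t e cd.

Definition bridge (x y : V) (ab : E) : Prop :=
  forall p, is_path x p y -> ab \in p.

(* ext(uv) : X is the s-(src uv) bridges in path order, then uv, then the
   (tgt uv)-t bridges in path order.  "Path order" is realised by filtering
   an arbitrary s-(src uv) path (resp. (tgt uv)-t path). *)
Definition is_ext (s t : V) (uv : E) (X : seq E) : Prop :=
  exists p q, [/\ is_path s p (src uv), is_path (tgt uv) q t &
    X = [seq e <- p | `[< bridge s (src uv) e >]] ++
        uv :: [seq e <- q | `[< bridge (tgt uv) t e >]]].

Definition reaches (ab cd : E) : Prop := exists p, is_path (tgt ab) p (src cd).

Definition arc_sequence (X : seq E) : Prop :=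
  forall (e0 : E) i, i.+1 < size X -> reaches (nth e0 X i) (nth e0 X i.+1).

Definition subseqA (X Y : seq E) : Prop := {subset X <= Y}.

Definition st_path (s t : V) (p : seq E) : Prop := is_path s p t.

Definition arc_path_cover (s t : V) (C : seq (seq E)) : Prop :=
  (forall p, p \in C -> st_path s t p) /\ (forall e, exists2 p, p \in C & e \in p).

Definition safe (s t : V) (X : seq E) : Prop :=
  [/\ arc_sequence X,
      (exists p, st_path s t p /\ subseqA X p) &
      forall C, arc_path_cover s t C -> exists2 p, p \in C & subseqA X p].

Definition maximal_safe (s t : V) (X : seq E) : Prop :=
  safe s t X /\ ~ exists Y, [/\ safe s t Y, subseqA X Y & X <> Y].

End Graph.

From mathcomp Require Import all_boot boolp.
Set Implicit Arguments. Unset Strict Implicit. Unset Printing Implicit Defensive.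

(* Call an arc e forced by a if every s-t path through a contains e.  The
   arcs of ext(a) are exactly the arcs forced by a, so ext(a) is safe: every
   cover has a path through a.
   An arc uv strictly s-dominating some arc is the only arc entering tgt uv,
   and it is then the immediate s-dominator of every arc leaving tgt uv; so
   the leaves of the s-dominator tree are the arcs that strictly s-dominate
   nothing.  For such a non-leaf, compression gives two arcs leaving tgt uv,
   and two arcs with the same tail never lie on a common path of a DAG, so
   one of them, g, is not forced by uv although it forces uv: ext(g) is a
   safe proper extension of ext(uv).
   Conversely, if uv is a leaf of both trees, every arc f <> uv lies on an
   s-t path avoiding uv.  Given an arc e not forced by uv, these paths and an
   s-t path through uv avoiding e form a cover none of whose paths contains
   both uv and e, so no safe sequence contains ext(uv) and e.  A safe proper
   extension of ext(uv) must contain such an e, since safe sequences are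
   sorted by reachability and hence determined by their set of arcs.
   Reversing all arcs exchanges the two dominator trees. *)

Section Paths.
Variables (V E : finType) (src tgt : E -> V).

Definition acyclic : Prop := forall x p, is_path src tgt x p x -> p = [::].

Definition forced (s t : V) (a e : E) : Prop :=
  forall P, is_path src tgt s P t -> a \in P -> e \in P.

Definition reachesb : rel E := fun a b => `[< reaches src tgt a b >].

Lemma is_path_catI x p1 z p2 y :
  is_path src tgt x p1 z -> is_path src tgt z p2 y ->
  is_path src tgt x (p1 ++ p2) y.
Proof.
elim: p1 x => [|e p1 IH] x /=; first by move/eqP->.
by case/andP=> -> /IH; apply.
Qed.

Lemma is_path_cat_cons x p1 e p2 y :
  is_path src tgt x (p1 ++ e :: p2) y =
  is_path src tgt x p1 (src e) && is_path src tgt (tgt e) p2 y.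
Proof.
elim: p1 x => [|f p1 IH] x /=; first by rewrite eq_sym.
by rewrite IH andbA.
Qed.

Lemma bridgeN x y e :
  ~ bridge src tgt x y e -> exists2 p, is_path src tgt x p y & e \notin p.
Proof. by move=> /existsNP[p /not_implyP[pp /negP ep]]; exists p. Qed.

Lemma reachesb_trans : transitive reachesb.
Proof.
move=> b a c /asboolP[p pp] /asboolP[q qq]; apply/asboolP.
by exists (p ++ b :: q); rewrite is_path_cat_cons pp.
Qed.

Lemma is_path_sorted x p y : is_path src tgt x p y -> sorted reachesb p.
Proof.
case: p => [|e p] //= /andP[_]; elim: p e => [|f p IH] e //= /andP[/eqP fe pp].
by rewrite (IH f pp) andbT; apply/asboolP; exists [::]; rewrite /= fe.
Qed.

Lemma arc_sequenceP X : arc_sequence src tgt X <-> sorted reachesb X.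
Proof.
split=> [|/sortedP srt e0 i lt]; last exact/asboolP/srt.
by case: X => // x X seqX; apply/(sortedP x) => i lt; apply/asboolP/seqX.
Qed.

Section Acyclic.
Hypothesis acyc : acyclic.

Lemma no_path_tgt_src e q : ~ is_path src tgt (tgt e) q (src e).
Proof.
by move=> qp; have /acyc : is_path src tgt (src e) (e :: q) (src e) by rewrite /= eqxx.
Qed.

Lemma path_from_tgt_notin e q y : is_path src tgt (tgt e) q y -> e \notin q.
Proof.
apply: contraTN => /splitPr[q1 q2]; rewrite is_path_cat_cons.
by apply/nandP; left; apply/negP/no_path_tgt_src.
Qed.

Lemma reachesb_irr : irreflexive reachesb.
Proof. by move=> a; apply/negP => /asboolP[p /no_path_tgt_src]. Qed.

Lemma path_src_inj x q y f0 f1 :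
  is_path src tgt x q y -> f0 \in q -> f1 \in q -> src f0 = src f1 -> f0 = f1.
Proof.
move=> qp f0q; case/splitPr: f0q qp => q1 q2.
rewrite is_path_cat_cons mem_cat in_cons => /andP[q1p q2p] /or3P[f1q1|/eqP//|f1q2] same.
- case/splitPr: f1q1 q1p => r1 r2; rewrite is_path_cat_cons same.
  by case/andP=> _ /no_path_tgt_src.
- case/splitPr: f1q2 q2p => r1 r2; rewrite is_path_cat_cons -same.
  by case/andP=> /no_path_tgt_src.
Qed.

End Acyclic.
End Paths.

Section Reversal.
Variables (V E : finType) (src tgt : E -> V).

Lemma is_path_rev x p y : is_path tgt src y (rev p) x = is_path src tgt x p y.
Proof.
elim: p x => [|e p IH] x /=; first by rewrite eq_sym.
by rewrite rev_cons -cats1 is_path_cat_cons IH /= andbC.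
Qed.

Lemma bridge_rev x y e : bridge tgt src y x e <-> bridge src tgt x y e.
Proof.
split=> b p pp; rewrite -mem_rev; apply: b; first by rewrite is_path_rev.
by rewrite -is_path_rev revK.
Qed.

Lemma sdom_rev t a b : sdom tgt src t a b <-> tdom src tgt t a b.
Proof.
by split=> -[->|dom]; [left | right; apply/bridge_rev | left | right; apply/bridge_rev].
Qed.

Lemma strict_sdom_rev t a b :
  strict_sdom tgt src t a b <-> strict_tdom src tgt t a b.
Proof. by rewrite /strict_sdom /strict_tdom sdom_rev. Qed.

Lemma idom_s_rev t a b : idom_s tgt src t a b <-> idom_t src tgt t a b.
Proof.
rewrite /idom_s /idom_t strict_sdom_rev.
by split=> -[strict dom]; split=> // x /strict_sdom_rev/dom/sdom_rev.
Qed.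

Lemma leaf_s_rev t a : leaf_s tgt src t a <-> leaf_t src tgt t a.
Proof. by split=> leaf cd /idom_s_rev; apply: leaf. Qed.

Lemma acyclic_rev : acyclic src tgt -> acyclic tgt src.
Proof.
by move=> acyc x p; rewrite -[p]revK is_path_rev => /acyc ->.
Qed.

Lemma forced_rev s t a e : forced tgt src t s a e <-> forced src tgt s t a e.
Proof.
split=> frc P Pst aP; rewrite -mem_rev; apply: frc; rewrite ?mem_rev //.
  by rewrite is_path_rev.
by rewrite -is_path_rev revK.
Qed.

End Reversal.

Section SourceSide.
Variables (V E : finType) (src tgt : E -> V) (s t : V).
Hypothesis acyc : acyclic src tgt.
Hypothesis from_s : forall v, exists p, is_path src tgt s p v.
Hypothesis to_t : forall v, exists q, is_path src tgt v q t.
Hypothesis compressed : arc_compressed src tgt.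

Lemma strict_sdom_bridge uv f : strict_sdom src tgt s uv f ->
  bridge src tgt s (tgt uv) uv /\ exists g, src g = tgt uv.
Proof.
case=> -[eq|dom] neq; first by case: neq.
have [p pp] := from_s (src f).
have uvp := dom _ pp; move: pp; case/splitPr: uvp => p1 p2.
rewrite is_path_cat_cons => /andP[_ p2p].
split=> [w wp|].
  have := dom _ (is_path_catI wp p2p).
  by rewrite mem_cat (negbTE (path_from_tgt_notin acyc p2p)) orbF.
by case: p2 p2p => [/eqP->|g p2 /andP[/eqP gsrc _]]; [exists f | exists g].
Qed.

Lemma idom_s_out_arc uv g : bridge src tgt s (tgt uv) uv -> src g = tgt uv ->
  idom_s src tgt s uv g.
Proof.
move=> b gsrc; have uvNg : uv <> g.
  move=> eq; subst g; apply: (no_path_tgt_src acyc (e := uv) (q := [::])).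
  by rewrite /= gsrc.
split=> [|x [[eq|xdom] xNg]]; first by split=> //; right; rewrite gsrc.
  by case: xNg.
case: (eqVneq x uv) => [->|xNuv]; [by left | right => r rp].
have := xdom (r ++ [:: uv]).
by rewrite is_path_cat_cons rp gsrc /= eqxx mem_cat mem_seq1 (negbTE xNuv) orbF; apply.
Qed.

Lemma leaf_sP uv : leaf_s src tgt s uv <-> forall f, ~ strict_sdom src tgt s uv f.
Proof.
split=> [leaf f /strict_sdom_bridge[b [g gsrc]] | nodom cd [strict _]].
  exact: leaf (idom_s_out_arc b gsrc).
exact: nodom strict.
Qed.

Lemma bridge_unique_in_arc uv g :
  bridge src tgt s (tgt uv) uv -> tgt g = tgt uv -> g = uv.
Proof.
move=> b gtgt; case: (eqVneq g uv) => // gNuv.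
have [w wp] := from_s (src g).
have wg : is_path src tgt s (w ++ [:: g]) (tgt uv) by rewrite is_path_cat_cons wp /= gtgt.
have := b _ wg; rewrite mem_cat mem_seq1 eq_sym (negbTE gNuv) orbF => uvw.
move: wp; case/splitPr: uvw => w1 w2; rewrite is_path_cat_cons -gtgt.
by case/andP=> _ /(no_path_tgt_src acyc).
Qed.

Lemma forcedE a e : forced src tgt s t a e <->
  bridge src tgt s (src a) e \/ e = a \/ bridge src tgt (tgt a) t e.
Proof.
split=> [frc | ebr P + aP]; last first.
  case/splitPr: aP => P1 P2; rewrite is_path_cat_cons mem_cat in_cons.
  case/andP=> P1p P2p.
  by case: ebr => [/(_ _ P1p)->|[->|/(_ _ P2p)->]]; rewrite ?eqxx ?orbT.
apply: contrapT => /not_orP[/bridgeN[p pp ep] /not_orP[/eqP eNa /bridgeN[q qq eq]]].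
have : is_path src tgt s (p ++ a :: q) t by rewrite is_path_cat_cons pp.
move=> /frc; rewrite !mem_cat !in_cons eqxx orbT => /(_ isT).
by rewrite (negbTE ep) (negbTE eNa) (negbTE eq).
Qed.

Lemma mem_ext a X e : is_ext src tgt s t a X -> e \in X <-> forced src tgt s t a e.
Proof.
case=> p [q [pp qq ->]]; rewrite forcedE mem_cat in_cons !mem_filter.
split=> [/or3P[/andP[/asboolP b _]|/eqP->|/andP[/asboolP b _]]|].
- by left.
- by right; left.
- by right; right.
case=> [b|[->|b]]; rewrite ?eqxx ?orbT //.
  by rewrite (b _ pp) (asboolT b).
by rewrite (b _ qq) (asboolT b) !orbT.
Qed.

Lemma mem_ext_arc a X : is_ext src tgt s t a X -> a \in X.
Proof. by case=> p [q [_ _ ->]]; rewrite mem_cat mem_head orbT. Qed.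

Lemma safe_ext a X : is_ext src tgt s t a X -> safe src tgt s t X.
Proof.
move=> HX; have [p [q [pp qq X_def]]] := HX.
have Xsub P : is_path src tgt s P t -> a \in P -> subseqA X P.
  by move=> Pst aP e /(mem_ext _ HX); apply.
have pq : is_path src tgt s (p ++ a :: q) t by rewrite is_path_cat_cons pp.
split.
- apply/arc_sequenceP/(subseq_sorted (@reachesb_trans _ _ src tgt) _ (is_path_sorted pq)).
  by rewrite X_def cat_subseq ?filter_subseq //= eqxx filter_subseq.
- by exists (p ++ a :: q); split; last by apply: Xsub pq _; rewrite mem_cat mem_head orbT.
- move=> C [Cst Ccov]; have [P PC aP] := Ccov a.
  by exists P => //; apply: Xsub (Cst _ PC) aP.
Qed.

Lemma ext_exists a : exists X, is_ext src tgt s t a X.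
Proof.
by have [p pp] := from_s (src a); have [q qq] := to_t (tgt a); eexists; exists p, q.
Qed.

Lemma bridge_two_out_arcs uv f0 : bridge src tgt s (tgt uv) uv -> src f0 = tgt uv ->
  exists f1 f2, [/\ src f1 = tgt uv, src f2 = tgt uv & f1 != f2].
Proof.
move=> b f0src; have in_uv : indeg tgt (tgt uv) = 1.
  rewrite /indeg (_ : [set e | tgt e == tgt uv] = [set uv]) ?cards1 //.
  apply/setP => g; rewrite !inE; apply/eqP/eqP => [|->//].
  exact: bridge_unique_in_arc.
have /card_gt1P[f1 [f2 []]] : 1 < outdeg src (tgt uv).
  rewrite ltn_neqAle; apply/andP; split.
    by apply/eqP => out; apply: (compressed (v := tgt uv)).
  by apply/card_gt0P; exists f0; rewrite inE f0src.
by rewrite !inE => /eqP f1out /eqP f2out f1Nf2; exists f1, f2.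
Qed.

Lemma strict_sdom_unforced uv f : strict_sdom src tgt s uv f ->
  exists2 g, forced src tgt s t g uv & ~ forced src tgt s t uv g.
Proof.
case/strict_sdom_bridge => b [f0 /(bridge_two_out_arcs b)[f1 [f2 [f1out f2out f1Nf2]]]].
have forced_out g : src g = tgt uv -> forced src tgt s t g uv.
  move=> gsrc P Pst gP; move: Pst; case/splitPr: gP => P1 P2.
  by rewrite is_path_cat_cons gsrc mem_cat => /andP[/b ->].
have [p pp] := from_s (src uv); have [q qq] := to_t (tgt uv).
have P_uv : is_path src tgt s (p ++ uv :: q) t by rewrite is_path_cat_cons pp.
have uvP : uv \in p ++ uv :: q by rewrite mem_cat mem_head orbT.
have [uvf1|] := EM (forced src tgt s t uv f1); last by exists f1; first exact: forced_out.
exists f2 => [|uvf2]; first exact: forced_out.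
case/eqP: f1Nf2; apply: (path_src_inj acyc P_uv (uvf1 _ P_uv uvP) (uvf2 _ P_uv uvP)).
by rewrite f1out f2out.
Qed.

Lemma unforced_not_maximal uv g X : is_ext src tgt s t uv X ->
  forced src tgt s t g uv -> ~ forced src tgt s t uv g -> ~ maximal_safe src tgt s t X.
Proof.
move=> HX guv uvNg [_ no_ext]; have [Y HY] := ext_exists g.
apply: no_ext; exists Y; split; first exact: safe_ext HY.
  move=> e /(mem_ext _ HX) uve; apply/(mem_ext _ HY) => P Pst gP.
  exact: uve _ Pst (guv _ Pst gP).
by move=> XY; apply/uvNg/(mem_ext _ HX); rewrite XY; apply: mem_ext_arc HY.
Qed.

End SourceSide.

Section TargetSide.
Variables (V E : finType) (src tgt : E -> V) (s t : V).
Hypothesis acyc : acyclic src tgt.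
Hypothesis from_s : forall v, exists p, is_path src tgt s p v.
Hypothesis to_t : forall v, exists q, is_path src tgt v q t.
Hypothesis compressed : arc_compressed src tgt.

Let from_t_rev v : exists p, is_path tgt src t p v.
Proof. by have [q qq] := to_t v; exists (rev q); rewrite is_path_rev. Qed.

Let to_s_rev v : exists p, is_path tgt src v p s.
Proof. by have [p pp] := from_s v; exists (rev p); rewrite is_path_rev. Qed.

Let compressed_rev : arc_compressed tgt src.
Proof. by move=> v [i o]; apply: (compressed (conj o i)). Qed.

Lemma leaf_tP uv : leaf_t src tgt t uv <-> forall f, ~ strict_tdom src tgt t uv f.
Proof.
rewrite -leaf_s_rev (leaf_sP (acyclic_rev acyc) from_t_rev).
by split=> nodom f /strict_sdom_rev; apply: nodom.
Qed.

Lemma strict_tdom_unforced uv f : strict_tdom src tgt t uv f ->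
  exists2 g, forced src tgt s t g uv & ~ forced src tgt s t uv g.
Proof.
move/strict_sdom_rev.
case/(strict_sdom_unforced (acyclic_rev acyc) from_t_rev to_s_rev compressed_rev) => g.
by exists g; [apply/forced_rev | move/forced_rev].
Qed.

End TargetSide.

Lemma cover_of_paths (V E : finType) (src tgt : E -> V) (s t : V) (R : seq E -> Prop) :
  (forall f, exists P, [/\ is_path src tgt s P t, f \in P & R P]) ->
  exists2 C, arc_path_cover src tgt s t C & forall P, P \in C -> R P.
Proof.
case/choice=> path_of Hpath; exists [seq path_of f | f <- enum E].
  split=> [P /mapP[f _ ->]|f]; first by case: (Hpath f).
  by exists (path_of f); [rewrite map_f ?mem_enum | case: (Hpath f)].
by move=> P /mapP[f _ ->]; case: (Hpath f).
Qed.

Section Maximality.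
Variables (V E : finType) (src tgt : E -> V) (s t : V).
Hypothesis acyc : acyclic src tgt.
Hypothesis from_s : forall v, exists p, is_path src tgt s p v.
Hypothesis to_t : forall v, exists q, is_path src tgt v q t.

Lemma leaves_avoiding_path uv f :
  leaf_s src tgt s uv -> leaf_t src tgt t uv -> f != uv ->
  exists P, [/\ is_path src tgt s P t, f \in P & uv \notin P].
Proof.
move=> /(leaf_sP acyc from_s) Ls /(leaf_tP acyc to_t) Lt fNuv.
have uvNf : uv <> f by apply/eqP; rewrite eq_sym.
have [p pp uvp] : exists2 p, is_path src tgt s p (src f) & uv \notin p.
  by apply: bridgeN => b; apply: (Ls f); split; first right.
have [q qq uvq] : exists2 q, is_path src tgt (tgt f) q t & uv \notin q.
  by apply: bridgeN => b; apply: (Lt f); split; first right.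
exists (p ++ f :: q); split; first by rewrite is_path_cat_cons pp.
  by rewrite mem_cat mem_head orbT.
by rewrite mem_cat in_cons (negbTE uvp) (negbTE uvq) eq_sym (negbTE fNuv).
Qed.

Lemma leaves_maximal_safe uv X :
  leaf_s src tgt s uv -> leaf_t src tgt t uv ->
  is_ext src tgt s t uv X -> maximal_safe src tgt s t X.
Proof.
move=> Ls Lt HX; have Xsafe := safe_ext HX.
split=> // -[Y [[Yseq _ Ysafe] XY XNY]].
have [e eY eX] : exists2 e, e \in Y & e \notin X.
  apply: contra_notP XNY => noe.
  apply: (irr_sorted_eq (@reachesb_trans _ _ src tgt) (reachesb_irr acyc)).
  - by case: Xsafe => /arc_sequenceP.
  - exact/arc_sequenceP.
  - move=> e; apply/idP/idP => [/XY //|eY].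
    by apply: contra_notT noe => eX; exists e.
have [P [Pst uvP eP]] : exists P, [/\ is_path src tgt s P t, uv \in P & e \notin P].
  apply: contra_notP (negP eX) => noP; apply/(mem_ext _ HX) => P Pst uvP.
  by apply: contra_notT noP => eP; exists P.
have [C Ccov Cok] : exists2 C, arc_path_cover src tgt s t C &
    forall Q, Q \in C -> uv \in Q -> e \notin Q.
  apply: cover_of_paths => f; case: (eqVneq f uv) => [->|fNuv]; first by exists P.
  have [Q [Qst fQ uvQ]] := leaves_avoiding_path Ls Lt fNuv.
  by exists Q; split=> //; rewrite (negbTE uvQ).
have [Q QC YQ] := Ysafe C Ccov.
have := Cok Q QC (YQ _ (XY _ (mem_ext_arc HX))).
by rewrite (YQ _ eY).
Qed.

End Maximality.

Theorem theorem8 (V E : finType) (src tgt : E -> V) (s t : V) (uv : E) :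
  st_DAG src tgt s t -> arc_compressed src tgt ->
  (exists X, is_ext src tgt s t uv X) /\
  (forall X, is_ext src tgt s t uv X ->
     (maximal_safe src tgt s t X <->
      leaf_s src tgt s uv /\ leaf_t src tgt t uv)).
Proof.
move=> [acyc [_ [_ [_ [_ reach]]]]] compressed.
have from_s v : exists p, is_path src tgt s p v by case: (reach v).
have to_t v : exists q, is_path src tgt v q t by case: (reach v).
split=> [|X HX]; first exact: ext_exists.
split=> [Xmax | [Ls Lt]]; last exact: leaves_maximal_safe.
split; [apply/(leaf_sP acyc from_s) | apply/(leaf_tP acyc to_t)] => f.
  case/(strict_sdom_unforced acyc from_s to_t compressed) => g guv uvNg.
  exact: (unforced_not_maximal from_s to_t HX guv uvNg Xmax).
case/(strict_tdom_unforced acyc from_s to_t compressed) => g guv uvNg.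
exact: (unforced_not_maximal from_s to_t HX guv uvNg Xmax).
Qed.
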